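(* Let $(\mathcal{A}',\mathcal{A},\mathcal{A}'')$ and $(\mathcal{B}',\mathcal{B},\mathcal{B}'')$ be two recollements of abelian categories. Suppose there are functors $F:\mathcal{A}\to\mathcal{B}$, $F':\mathcal{A}'\to\mathcal{B}'$ and $F'':\mathcal{A}''\to\mathcal{B}''$ such that: (1) $F$ and $F'$ are equivalences of categories; (2) the functors $j^*F$ and $F''j^*$ are naturally isomorphic; (3) the functors $i_*F'$ and $Fi_*$ are naturally isomorphic. Then $F''$ is full and essentially surjective.
   Context: A recollement $(\mathcal{A}',\mathcal{A},\mathcal{A}'')$ of abelian categories consists of functors $i_*:\mathcal{A}'\to\mathcal{A}$, $i^*,i^!:\mathcal{A}\to\mathcal{A}'$, $j^*:\mathcal{A}\to\mathcal{A}''$, $j_!,j_*:\mathcal{A}''\to\mathcal{A}$ such that: there are adjunctions $(j_!,j^* )$, $(j^*,j_* )$, $(i^*,i_* )$, $(i_*,i^!)$; the units $\mathrm{id}\to i^!i_*$ and $\mathrm{id}\to j^*j_!$ are isomorphisms; the counits $i^*i_*\to\mathrm{id}$ and $j^*j_*\to\mathrm{id}$ are isomorphisms; and $i_*$ is an embedding onto the full subcategory of objects $A$ with $j^*A=0$. The same notation $i_*,i^*,i^!,j^*,j_!,j_*$ is used for the functors of both recollements. *)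

From HB Require Import structures.
From mathcomp Require Import all_boot all_algebra.
Set Implicit Arguments. Unset Strict Implicit. Unset Printing Implicit Defensive.
Import GRing.Theory.
Local Open Scope ring_scope.

Record precat := PreCat {
  ob :> Type;
  hom : ob -> ob -> zmodType;
  idm : forall a, hom a a;
  comp : forall a b c, hom b c -> hom a b -> hom a c;
  comp_idl : forall a b (f : hom a b), comp (idm b) f = f;
  comp_idr : forall a b (f : hom a b), comp f (idm a) = f;
  comp_assoc : forall a b c d (f : hom c d) (g : hom b c) (h : hom a b),
      comp f (comp g h) = comp (comp f g) h;
  comp_addl : forall a b c (f g : hom b c) (h : hom a b),
      comp (f + g) h = comp f h + comp g h;
  comp_addr : forall a b c (f : hom b c) (g h : hom a b),
      comp f (g + h) = comp f g + comp f h }.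
Arguments hom {p} a b.
Arguments idm {p} a.
Arguments comp {p a b c} f g.

Section Basic.
Variable C : precat.

Definition is_zero_ob (z : C) : Prop :=
  forall y : C, (forall f : hom z y, f = 0) /\ (forall f : hom y z, f = 0).

Definition is_iso (a b : C) (f : hom a b) : Prop :=
  exists g : hom b a, comp g f = idm a /\ comp f g = idm b.

Definition iso_ob (a b : C) : Prop := exists f : hom a b, is_iso f.

Definition is_mono (a b : C) (m : hom a b) : Prop :=
  forall x (g h : hom x a), comp m g = comp m h -> g = h.

Definition is_epi (a b : C) (e : hom a b) : Prop :=
  forall x (g h : hom b x), comp g e = comp h e -> g = h.

Definition is_kernel (k a b : C) (f : hom a b) (m : hom k a) : Prop :=
  comp f m = 0 /\
  forall x (g : hom x a), comp f g = 0 -> exists! u : hom x k, comp m u = g.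

Definition is_cokernel (a b c : C) (f : hom a b) (e : hom b c) : Prop :=
  comp e f = 0 /\
  forall x (g : hom b x), comp g f = 0 -> exists! u : hom c x, comp u e = g.

Definition is_abelian : Prop :=
  (exists z : C, is_zero_ob z) /\
  (forall a b : C, exists (c : C) (i1 : hom a c) (i2 : hom b c)
       (p1 : hom c a) (p2 : hom c b),
       [/\ comp p1 i1 = idm a, comp p2 i2 = idm b,
           comp p1 i2 = 0, comp p2 i1 = 0 &
           comp i1 p1 + comp i2 p2 = idm c]) /\
  (forall (a b : C) (f : hom a b), exists (k : C) (m : hom k a), is_kernel f m) /\
  (forall (a b : C) (f : hom a b), exists (c : C) (e : hom b c), is_cokernel f e) /\
  (forall (a b : C) (m : hom a b), is_mono m ->
       exists (c : C) (f : hom b c), is_kernel f m) /\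
  (forall (a b : C) (e : hom a b), is_epi e ->
       exists (c : C) (f : hom c a), is_cokernel f e).
End Basic.

(* Functors (not required to be additive). *)
Record functor (C D : precat) := Functor {
  fob :> C -> D;
  fmap : forall a b : C, hom a b -> hom (fob a) (fob b);
  fmap_id : forall a, fmap (idm a) = idm (fob a);
  fmap_comp : forall a b c (f : hom b c) (g : hom a b),
      fmap (comp f g) = comp (fmap f) (fmap g) }.
Arguments fmap {C D} f0 {a b} f.

Definition idF (C : precat) : functor C C.
Proof. by refine (@Functor C C (fun a => a) (fun a b f => f) _ _). Defined.

Definition fcomp (C D E : precat) (G : functor D E) (F : functor C D) : functor C E.
Proof.
refine (@Functor C E (fun a => G (F a)) (fun a b f => fmap G (fmap F f)) _ _).
- by move=> a; rewrite !fmap_id.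
- by move=> a b c f g; rewrite !fmap_comp.
Defined.

Record nat_trans (C D : precat) (F G : functor C D) := NatTrans {
  nt :> forall a : C, hom (F a) (G a);
  nt_nat : forall (a b : C) (f : hom a b),
      comp (nt b) (fmap F f) = comp (fmap G f) (nt a) }.

Definition nat_iso (C D : precat) (F G : functor C D) : Prop :=
  exists eta : nat_trans F G, forall a, is_iso (eta a).

Record adjunction (C D : precat) (L : functor C D) (R : functor D C) := Adjunction {
  adj_unit : nat_trans (idF C) (fcomp R L);
  adj_counit : nat_trans (fcomp L R) (idF D);
  adj_tri1 : forall a : C,
      comp (adj_counit (L a)) (fmap L (adj_unit a)) = idm (L a);
  adj_tri2 : forall b : D,
      comp (fmap R (adj_counit b)) (adj_unit (R b)) = idm (R b) }.

Definition full (C D : precat) (F : functor C D) : Prop :=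
  forall (a b : C) (g : hom (F a) (F b)), exists f : hom a b, fmap F f = g.

Definition faithful (C D : precat) (F : functor C D) : Prop :=
  forall (a b : C) (f g : hom a b), fmap F f = fmap F g -> f = g.

Definition ess_surj (C D : precat) (F : functor C D) : Prop :=
  forall b : D, exists a : C, iso_ob (F a) b.

Definition is_equivalence (C D : precat) (F : functor C D) : Prop :=
  exists G : functor D C, nat_iso (fcomp G F) (idF C) /\ nat_iso (fcomp F G) (idF D).

Record recollement (A' A A'' : precat) := Recollement {
  i_lower : functor A' A;
  i_upper : functor A A';
  i_shriek : functor A A';
  j_upper : functor A A'';
  j_shriek : functor A'' A;
  j_lower : functor A'' A;
  adj_j_shriek : adjunction j_shriek j_upper;
  adj_j_lower : adjunction j_upper j_lower;
  adj_i_upper : adjunction i_upper i_lower;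
  adj_i_lower : adjunction i_lower i_shriek;
  unit_i_lower_iso : forall x, is_iso (adj_unit adj_i_lower x);
  unit_j_shriek_iso : forall x, is_iso (adj_unit adj_j_shriek x);
  counit_i_upper_iso : forall x, is_iso (adj_counit adj_i_upper x);
  counit_j_lower_iso : forall x, is_iso (adj_counit adj_j_lower x);
  (* i_* is an embedding onto the full subcategory {A | j^* A = 0} *)
  i_lower_full : full i_lower;
  i_lower_faithful : faithful i_lower;
  i_lower_image : forall a : A,
      is_zero_ob (j_upper a) <-> exists x : A', iso_ob (i_lower x) a }.

(* Essential surjectivity: if F a ≅ j_! b then F'' (j^* a) ≅ j^* (F a) ≅ j^* j_! b ≅ b.

   Fullness: since a1 ≅ j^* j_! a1, a2 ≅ j^* j_* a2 and j^* F ≅ F'' j^*, and F is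
   full, it suffices that j^* is full on Hom_B(X, Y) for X = F (j_! a1) and
   Y = F (j_* a2).  The objects of B killed by j^* are, up to isomorphism, the
   F (i_* z') with j^* (i_* z') = 0; hence X has no nonzero map into such an object
   and Y none out of one.  For such X and Y, the counit j_! j^* X -> X has cokernel
   and kernel killed by j^*; it is therefore an epi, and the transpose
   j_! j^* X -> Y of any g : j^* X -> j^* Y factors through it, giving a preimage
   of g. *)
From mathcomp Require Import ssreflect ssrfun ssrbool eqtype ssralg.
Set Implicit Arguments. Unset Strict Implicit. Unset Printing Implicit Defensive.
Import GRing.Theory.
Local Open Scope ring_scope.

Section Preadditive.
Variable C : precat.

Lemma comp0r (a b c : C) (f : hom b c) : comp f (0 : hom a b) = 0.
Proof.
have := comp_addr f (0 : hom a b) 0; rewrite addr0.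
by move/(congr1 (fun x => x - comp f 0)); rewrite subrr addrK.
Qed.

Lemma comp0l (a b c : C) (f : hom a b) : comp (0 : hom b c) f = 0.
Proof.
have := comp_addl (0 : hom b c) 0 f; rewrite addr0.
by move/(congr1 (fun x => x - comp 0 f)); rewrite subrr addrK.
Qed.

Lemma comp_subl (a b c : C) (f g : hom b c) (h : hom a b) :
  comp (f - g) h = comp f h - comp g h.
Proof.
rewrite comp_addl; congr (_ + _); apply/eqP.
by rewrite -addr_eq0 addrC -comp_addl subrr comp0l.
Qed.

Lemma zero_ob_idm0 (z : C) : idm z = 0 -> is_zero_ob z.
Proof.
move=> z0 y; split=> f.
- by rewrite -(comp_idr f) z0 comp0r.
- by rewrite -(comp_idl f) z0 comp0l.
Qed.

Lemma zero_ob_epi0 (a b : C) : is_epi (0 : hom a b) -> is_zero_ob b.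
Proof. by move=> epi0; apply: zero_ob_idm0; apply: epi0; rewrite comp_idl !comp0l. Qed.

Lemma zero_ob_mono0 (a b : C) : is_mono (0 : hom a b) -> is_zero_ob a.
Proof. by move=> mono0; apply: zero_ob_idm0; apply: mono0; rewrite comp_idr !comp0r. Qed.

Lemma kernel_mono (k a b : C) (f : hom a b) (m : hom k a) : is_kernel f m -> is_mono m.
Proof.
case=> fm0 kerP x g h mg_mh.
have fmg0 : comp f (comp m g) = 0 by rewrite comp_assoc fm0 comp0l.
by have [u [_ uniq_u]] := kerP x _ fmg0; rewrite -(uniq_u g) // (uniq_u h).
Qed.

Lemma cokernel_epi (a b c : C) (f : hom a b) (e : hom b c) : is_cokernel f e -> is_epi e.
Proof.
case=> ef0 cokerP x g h ge_he.
have gef0 : comp (comp g e) f = 0 by rewrite -comp_assoc ef0 comp0r.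
by have [u [_ uniq_u]] := cokerP x _ gef0; rewrite -(uniq_u g) // (uniq_u h).
Qed.

Lemma epi_of_cokernel0 (a b c : C) (f : hom a b) : is_cokernel f (0 : hom b c) -> is_epi f.
Proof.
case=> _ cokerP x g h gf_hf.
have [u [u0 _]] : exists! u : hom c x, comp u 0 = g - h.
  by apply: cokerP; rewrite comp_subl gf_hf subrr.
by apply/eqP; rewrite -subr_eq0 -u0 comp0r.
Qed.

Lemma abelian_epi_factor (a b y k : C) (e : hom a b) (m : hom k a) (phi : hom a y) :
  is_abelian C -> is_epi e -> is_kernel e m -> comp phi m = 0 ->
  exists h : hom b y, comp h e = phi.
Proof.
case=> _ [_ [_ [_ [_ epi_coker]]]] epi_e [_ kerP] phim0.
have [w [f [ef0 cokerP]]] := epi_coker _ _ _ epi_e.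
have [u [mu_f _]] := kerP _ f ef0.
have phif0 : comp phi f = 0 by rewrite -mu_f comp_assoc phim0 comp0l.
by have [h [he _]] := cokerP _ phi phif0; exists h.
Qed.

Lemma iso_mono (a b : C) (f : hom a b) : is_iso f -> is_mono f.
Proof.
case=> f' [f'f _] x g h fg_fh.
by rewrite -(comp_idl g) -(comp_idl h) -f'f -!comp_assoc fg_fh.
Qed.

Lemma iso_epi (a b : C) (f : hom a b) : is_iso f -> is_epi f.
Proof.
case=> f' [_ ff'] x g h gf_hf.
by rewrite -(comp_idr g) -(comp_idr h) -ff' !comp_assoc gf_hf.
Qed.

Lemma iso_inv (a b : C) (f : hom a b) : is_iso f ->
  exists g : hom b a, [/\ is_iso g, comp g f = idm a & comp f g = idm b].
Proof. by case=> g [gf fg]; exists g; split => //; exists f. Qed.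

Lemma iso_comp (a b c : C) (f : hom a b) (g : hom b c) :
  is_iso f -> is_iso g -> is_iso (comp g f).
Proof.
case=> f' [f'f ff'] [g' [g'g gg']]; exists (comp f' g'); split.
- by rewrite -comp_assoc (comp_assoc g') g'g comp_idl f'f.
- by rewrite -comp_assoc (comp_assoc f) ff' comp_idl gg'.
Qed.

Lemma iso_ob_refl (a : C) : iso_ob a a.
Proof. by exists (idm a), (idm a); rewrite comp_idl. Qed.

Lemma iso_ob_sym (a b : C) : iso_ob a b -> iso_ob b a.
Proof. by case=> f /iso_inv [g [iso_g _ _]]; exists g. Qed.

Lemma iso_ob_trans (a b c : C) : iso_ob a b -> iso_ob b c -> iso_ob a c.
Proof. by case=> f iso_f [g iso_g]; exists (comp g f); apply: iso_comp. Qed.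

Definition no_maps_to (P : C -> Prop) (x : C) : Prop :=
  forall c, P c -> forall u : hom x c, u = 0.

Definition no_maps_from (P : C -> Prop) (y : C) : Prop :=
  forall c, P c -> forall u : hom c y, u = 0.

End Preadditive.

Lemma fmap_iso (C D : precat) (F : functor C D) (a b : C) (f : hom a b) :
  is_iso f -> is_iso (fmap F f).
Proof. by case=> g [gf fg]; exists (fmap F g); rewrite -!fmap_comp gf fg !fmap_id. Qed.

Lemma iso_ob_fmap (C D : precat) (F : functor C D) (a b : C) :
  iso_ob a b -> iso_ob (F a) (F b).
Proof. by case=> f iso_f; exists (fmap F f); apply: fmap_iso. Qed.

Lemma iso_ob_nat_iso (C D : precat) (F G : functor C D) (a : C) :
  nat_iso F G -> iso_ob (F a) (G a).
Proof. by case=> eta iso_eta; exists (eta a). Qed.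

(* Functors are not assumed additive. *)
Lemma fmap0_full (C D : precat) (F : functor C D) :
  full F -> (exists z : C, is_zero_ob z) -> forall a b : C, fmap F (0 : hom a b) = 0.
Proof.
move=> fullF [z zP] a b.
have idFz0 : idm (F z) = 0.
  have [f1 <-] := fullF z z (idm (F z)); have [f2 <-] := fullF z z 0.
  by rewrite ((zP z).1 f1) ((zP z).1 f2).
have -> : (0 : hom a b) = comp (0 : hom z b) (0 : hom a z) by rewrite comp0r.
by rewrite fmap_comp -[fmap F (0 : hom a z)]comp_idl idFz0 comp0l comp0r.
Qed.

Definition full_at (C D : precat) (F : functor C D) (a b : C) : Prop :=
  forall g : hom (F a) (F b), exists f : hom a b, fmap F f = g.

Lemma full_at_iso (C D : precat) (F : functor C D) (a a' b b' : C) :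
  iso_ob a a' -> iso_ob b b' -> full_at F a' b' -> full_at F a b.
Proof.
case=> s /iso_inv [s' [_ s's _]] [t /iso_inv [t' [_ t't _]]] fullF g.
have [f' Ff'] := fullF (comp (fmap F t) (comp g (fmap F s'))).
exists (comp t' (comp f' s)).
rewrite !fmap_comp Ff' !comp_assoc -fmap_comp t't fmap_id comp_idl.
by rewrite -comp_assoc -fmap_comp s's fmap_id comp_idr.
Qed.

Lemma full_at_fcomp (C D E : precat) (G : functor D E) (F : functor C D) (a b : C) :
  full F -> full_at G (F a) (F b) -> full_at (fcomp G F) a b.
Proof.
move=> fullF fullG g; have [h <-] := fullG g; have [f <-] := fullF a b h.
by exists f.
Qed.

Lemma full_at_fcompl (C D E : precat) (G : functor D E) (F : functor C D) (a b : C) :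
  full_at (fcomp G F) a b -> full_at G (F a) (F b).
Proof. by move=> fullGF g; have [f <-] := fullGF g; exists (fmap F f). Qed.

Lemma full_at_nat_iso (C D : precat) (F G : functor C D) (a b : C) :
  nat_iso F G -> full_at F a b <-> full_at G a b.
Proof.
case=> eta /[dup] /(_ a) /iso_inv [ea' [_ ea'K eaK']] /(_ b) /iso_inv [eb' [_ eb'K ebK']].
split=> fullF g.
- have [f Ff] := fullF (comp eb' (comp g (eta a))); exists f.
  rewrite -[fmap G f]comp_idr -eaK' comp_assoc -nt_nat Ff.
  by rewrite !comp_assoc ebK' comp_idl -comp_assoc eaK' comp_idr.
- have [f Gf] := fullF (comp (eta b) (comp g ea')); exists f.
  rewrite -[fmap F f]comp_idl -eb'K -comp_assoc nt_nat Gf.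
  by rewrite -!comp_assoc ea'K comp_idr comp_assoc eb'K comp_idl.
Qed.

Lemma equivalence_full (C D : precat) (F : functor C D) : is_equivalence F -> full F.
Proof.
case=> G [nu mu] a b.
apply: (full_at_iso (iso_ob_sym (iso_ob_nat_iso a nu)) (iso_ob_sym (iso_ob_nat_iso b nu))).
apply: (full_at_fcompl (F := G)); apply/(full_at_nat_iso _ _ mu).
by move=> g; exists g.
Qed.

Lemma equivalence_ess_surj (C D : precat) (F : functor C D) :
  is_equivalence F -> ess_surj F.
Proof. by case=> G [_ mu] b; exists (G b); apply: (iso_ob_nat_iso b mu). Qed.

Section Adjunction.
Variables (C D : precat) (L : functor C D) (R : functor D C) (adj : adjunction L R).
Local Notation eta := (adj_unit adj).
Local Notation eps := (adj_counit adj).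

Lemma radj_homE (w : C) (b : D) (v : hom w (R b)) :
  v = comp (fmap R (comp (eps b) (fmap L v))) (eta w).
Proof.
rewrite fmap_comp -comp_assoc.
by rewrite -[comp (fmap R (fmap L v)) _](nt_nat eta) comp_assoc adj_tri2 comp_idl.
Qed.

Lemma ladj_homE (a : C) (x : D) (u : hom (L a) x) :
  u = comp (eps x) (fmap L (comp (fmap R u) (eta a))).
Proof.
rewrite fmap_comp comp_assoc.
by rewrite [comp (eps x) _](nt_nat eps) -comp_assoc adj_tri1 comp_idr.
Qed.

Lemma ladj_epi (a b : C) (e : hom a b) : is_epi e -> is_epi (fmap L e).
Proof.
move=> epi_e x g h ge_he; rewrite (ladj_homE g) (ladj_homE h).
congr (comp _ (fmap L _)); apply: epi_e.
by rewrite -!comp_assoc (nt_nat eta) /= !comp_assoc -!fmap_comp ge_he.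
Qed.

Lemma radj_mono (x y : D) (m : hom x y) : is_mono m -> is_mono (fmap R m).
Proof.
move=> mono_m w g h mg_mh; rewrite (radj_homE g) (radj_homE h).
congr (comp (fmap R _) _); apply: mono_m.
by rewrite !comp_assoc -(nt_nat eps) /= -!comp_assoc -!fmap_comp mg_mh.
Qed.

Lemma radj_hom_to_zero (w : C) (z : D) :
  is_zero_ob z -> forall u v : hom w (R z), u = v.
Proof.
move=> zP u v; rewrite (radj_homE u) (radj_homE v).
by rewrite ((zP _).2 (comp (eps z) _)) ((zP _).2 (comp (eps z) _)).
Qed.

Lemma ladj_hom_to_Rzero (a : C) (x : D) :
  is_zero_ob (R x) -> forall u v : hom (L a) x, u = v.
Proof.
move=> Rx0 u v; rewrite (ladj_homE u) (ladj_homE v).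
by rewrite ((Rx0 _).2 (comp (fmap R u) _)) ((Rx0 _).2 (comp (fmap R v) _)).
Qed.

Lemma radj_hom_from_Lzero (w : C) (b : D) :
  is_zero_ob (L w) -> forall u v : hom w (R b), u = v.
Proof.
move=> Lw0 u v; rewrite (radj_homE u) (radj_homE v).
by rewrite ((Lw0 _).1 (comp (eps b) (fmap L u))) ((Lw0 _).1 (comp (eps b) (fmap L v))).
Qed.

Lemma fmap0_radj : (exists z : D, is_zero_ob z) -> forall x y : D, fmap R (0 : hom x y) = 0.
Proof.
case=> z zP x y.
have -> : (0 : hom x y) = comp (0 : hom z y) (0 : hom x z) by rewrite comp0r.
by rewrite fmap_comp (radj_hom_to_zero zP (fmap R _) 0) comp0r.
Qed.

Lemma no_maps_to_ladj (a : C) : no_maps_to (fun x => is_zero_ob (R x)) (L a).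
Proof. by move=> x Rx0 u; apply: ladj_hom_to_Rzero. Qed.

Lemma no_maps_from_radj (b : D) : no_maps_from (fun w => is_zero_ob (L w)) (R b).
Proof. by move=> w Lw0 u; apply: radj_hom_from_Lzero. Qed.

End Adjunction.

Section LiftAlongMiddleFunctor.
Variables (C D : precat) (L : functor D C) (R : functor C D) (J : functor D C).
Variables (adjLR : adjunction L R) (adjRJ : adjunction R J).
Hypothesis unit_iso : forall d, is_iso (adj_unit adjLR d).
Hypothesis abelianC : is_abelian C.
Local Notation eps := (adj_counit adjLR).
Local Notation ker_R := (fun c : C => is_zero_ob (R c)).

Lemma fmap_counit_iso (x : C) : is_iso (fmap R (eps x)).
Proof.
have [th [iso_th _ eta_th]] := iso_inv (unit_iso (R x)).
suff -> : fmap R (eps x) = th by [].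
by rewrite -[fmap R _]comp_idr -eta_th comp_assoc adj_tri2 comp_idl.
Qed.

Lemma counit_epi (x : C) : no_maps_to ker_R x -> is_epi (eps x).
Proof.
move=> x_orth; have [_ [_ [_ [coker _]]]] := abelianC.
have [c [q coker_q]] := coker _ _ (eps x).
suff q0 : q = 0 by rewrite q0 in coker_q; apply: epi_of_cokernel0 coker_q.
apply: x_orth; apply: (@zero_ob_epi0 _ (R x)).
have -> : (0 : hom (R x) (R c)) = fmap R q.
  apply: (iso_epi (fmap_counit_iso x)).
  by rewrite -fmap_comp coker_q.1 (fmap0_radj adjLR abelianC.1) comp0l.
exact/(ladj_epi adjRJ)/(cokernel_epi coker_q).
Qed.

Lemma zero_ob_kernel_counit (x k : C) (m : hom k (L (R x))) :
  is_kernel (eps x) m -> is_zero_ob (R k).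
Proof.
move=> ker_m; apply: (@zero_ob_mono0 _ _ (R (L (R x)))).
have -> : (0 : hom (R k) (R (L (R x)))) = fmap R m.
  apply: (iso_mono (fmap_counit_iso x)).
  by rewrite -fmap_comp ker_m.1 (fmap0_radj adjLR abelianC.1) comp0r.
exact/(radj_mono adjLR)/(kernel_mono ker_m).
Qed.

Lemma full_at_radj (x y : C) :
  no_maps_to ker_R x -> no_maps_from ker_R y -> full_at R x y.
Proof.
move=> x_orth y_orth g.
have [_ [_ [ker _]]] := abelianC; have [k [m ker_m]] := ker _ _ (eps x).
have [h h_eps] : exists h : hom x y, comp h (eps x) = comp (eps y) (fmap L g).
  apply: (abelian_epi_factor abelianC (counit_epi x_orth) ker_m).
  exact: y_orth (zero_ob_kernel_counit ker_m) _.
exists h; rewrite [RHS](radj_homE adjLR g) -h_eps fmap_comp -comp_assoc.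
by rewrite adj_tri2 comp_idr.
Qed.

End LiftAlongMiddleFunctor.

Section FullTransport.
Variables (C D : precat) (F : functor C D).
Hypotheses (fullF : full F) (zeroC : exists z : C, is_zero_ob z).
Variables (P : C -> Prop) (Q : D -> Prop).
Hypothesis Q_iso_image : forall d, Q d -> exists2 c, P c & iso_ob (F c) d.

Lemma no_maps_to_fmap (x : C) : no_maps_to P x -> no_maps_to Q (F x).
Proof.
move=> x_orth d /Q_iso_image [c Pc [s /iso_inv [s' [_ _ ss']]]] u.
have [v Fv] := fullF (comp s' u).
by rewrite -[u]comp_idl -ss' -comp_assoc -Fv (x_orth c Pc v) fmap0_full // comp0r.
Qed.

Lemma no_maps_from_fmap (y : C) : no_maps_from P y -> no_maps_from Q (F y).
Proof.
move=> y_orth d /Q_iso_image [c Pc [s /iso_inv [s' [_ _ ss']]]] u.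
have [v Fv] := fullF (comp u s).
by rewrite -[u]comp_idr -ss' comp_assoc -Fv (y_orth c Pc v) fmap0_full // comp0l.
Qed.

End FullTransport.

Lemma ker_j_upper_iso_image (A' A A'' B' B B'' : precat)
    (RA : recollement A' A A'') (RB : recollement B' B B'')
    (F : functor A B) (F' : functor A' B') :
  ess_surj F' -> nat_iso (fcomp (i_lower RB) F') (fcomp F (i_lower RA)) ->
  forall b : B, is_zero_ob (j_upper RB b) ->
  exists2 a : A, is_zero_ob (j_upper RA a) & iso_ob (F a) b.
Proof.
move=> esF' beta b /(i_lower_image RB b) [z iz_b].
have [z' F'z'_z] := esF' z.
exists (i_lower RA z'); first by apply/(i_lower_image RA); exists z'; apply: iso_ob_refl.
apply: iso_ob_trans (iso_ob_sym (iso_ob_nat_iso z' beta)) _.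
exact: iso_ob_trans (iso_ob_fmap (i_lower RB) F'z'_z) iz_b.
Qed.

Theorem lemma4p4 (A' A A'' B' B B'' : precat)
  (hA' : is_abelian A') (hA : is_abelian A) (hA'' : is_abelian A'')
  (hB' : is_abelian B') (hB : is_abelian B) (hB'' : is_abelian B'')
  (RA : recollement A' A A'') (RB : recollement B' B B'')
  (F : functor A B) (F' : functor A' B') (F'' : functor A'' B'') :
  is_equivalence F -> is_equivalence F' ->
  nat_iso (fcomp (j_upper RB) F) (fcomp F'' (j_upper RA)) ->
  nat_iso (fcomp (i_lower RB) F') (fcomp F (i_lower RA)) ->
  full F'' /\ ess_surj F''.
Proof.
move=> eqF eqF' alpha beta.
have fullF := equivalence_full eqF.
have ker_image := ker_j_upper_iso_image (equivalence_ess_surj eqF') beta.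
split=> [a1 a2 | b].
- have a1_iso : iso_ob a1 (j_upper RA (j_shriek RA a1)).
    by exists (adj_unit (adj_j_shriek RA) a1); apply: unit_j_shriek_iso.
  have a2_iso : iso_ob a2 (j_upper RA (j_lower RA a2)).
    by apply: iso_ob_sym; exists (adj_counit (adj_j_lower RA) a2); apply: counit_j_lower_iso.
  apply: (full_at_iso a1_iso a2_iso); apply: full_at_fcompl.
  apply/(full_at_nat_iso _ _ alpha); apply: (full_at_fcomp fullF).
  apply: (full_at_radj (adj_j_lower RB) (unit_j_shriek_iso RB) hB).
  + exact: (no_maps_to_fmap fullF hA.1 ker_image (no_maps_to_ladj (adj_j_shriek RA) (a := a1))).
  + exact: (no_maps_from_fmap fullF hA.1 ker_image (no_maps_from_radj (adj_j_lower RA) (b := a2))).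
- have [a Fa_b] := equivalence_ess_surj eqF (j_shriek RB b).
  exists (j_upper RA a); apply: iso_ob_trans (iso_ob_sym (iso_ob_nat_iso a alpha)) _.
  apply: iso_ob_trans (iso_ob_fmap (j_upper RB) Fa_b) _.
  by apply: iso_ob_sym; exists (adj_unit (adj_j_shriek RB) b); apply: unit_j_shriek_iso.
Qed.
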